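(* Let $\mathcal{A}=\{\pm e_1,\ldots,\pm e_n\}$ be the set of signed canonical unit vectors in $\mathbb{R}^n$, so that $\|\cdot\|_{\mathcal{A}}=\|\cdot\|_1$. Suppose $x^\star\in\mathbb{R}^n$ has $k\ge1$ nonzero entries, and let $\gamma\in[0,1]$. Then $$\phi_\gamma(x^\star,\mathcal{A}):=\inf\left\{\frac{\|z\|_2}{\|z\|_1}: 0\ne z\in C_\gamma(x^\star,\mathcal{A})\right\}\ \ge\ \frac{1-\gamma}{2\sqrt{k}},$$ where $C_\gamma(x^\star,\mathcal{A})=\operatorname{cone}\left(\{z\in\mathbb{R}^n:\|x^\star+z\|_1\le\|x^\star\|_1+\gamma\|z\|_1\}\right)$.
   Context: $\operatorname{cone}(X)=\{\lambda x:\lambda\ge0,x\in X\}$ denotes the conic hull. *)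

From HB Require Import structures.
From mathcomp Require Import all_boot all_order all_algebra.
From mathcomp Require Import reals.
Set Implicit Arguments. Unset Strict Implicit. Unset Printing Implicit Defensive.
Import Order.TTheory GRing.Theory Num.Theory.
Local Open Scope ring_scope.

Section Defs.
Variable R : realType.

(* l1 norm (= atomic norm for A = {+-e_1,...,+-e_n}) *)
Definition l1norm (n : nat) (z : 'rV[R]_n) : R := \sum_(i < n) `|z 0 i|.

Definition l2norm (n : nat) (z : 'rV[R]_n) : R := Num.sqrt (\sum_(i < n) z 0 i ^+ 2).

Definition gamma_descent (n : nat) (gamma : R) (xs : 'rV[R]_n) (z : 'rV[R]_n) : Prop :=
  l1norm (xs + z) <= l1norm xs + gamma * l1norm z.

Definition cone (n : nat) (X : 'rV[R]_n -> Prop) (v : 'rV[R]_n) : Prop :=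
  exists (l : R) (x : 'rV[R]_n), 0 <= l /\ X x /\ v = l *: x.

Definition C_gamma (n : nat) (gamma : R) (xs : 'rV[R]_n) : 'rV[R]_n -> Prop :=
  cone (gamma_descent gamma xs).

End Defs.

(** Split the coordinates into the support [S] of [x*] (of size [k]) and its
    complement.  For [z] in the descent set, the triangle inequality on [S]
    gives [||z_{S^c}||_1 - ||z_S||_1 <= gamma ||z||_1], i.e.
    [(1 - gamma) ||z||_1 <= 2 ||z_S||_1], and this is preserved by nonnegative
    scaling, hence holds on the cone.  Cauchy-Schwarz on [S] then gives
    [||z_S||_1 <= sqrt k ||z||_2]. *)

From HB Require Import structures.
From mathcomp Require Import all_boot all_order all_algebra.
From mathcomp Require Import reals ring lra.
Set Implicit Arguments.
Unset Strict Implicit.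
Unset Printing Implicit Defensive.
Import Order.TTheory GRing.Theory Num.Theory.
Local Open Scope ring_scope.

Lemma sqr_sum_le_card_sum_sqr (R : realFieldType) (I : finType) (S : {set I})
    (a : I -> R) :
  (\sum_(i in S) a i) ^+ 2 <= #|S|%:R * \sum_(i in S) a i ^+ 2.
Proof.
have [/eqP|card_gt0] := posnP #|S|.
  by rewrite cards_eq0 => /eqP ->; rewrite !big_set0 expr0n /= mulr0.
set A := \sum_(i in S) a i; set Q := \sum_(i in S) a i ^+ 2; set k := #|S|%:R.
have k_gt0 : 0 < k :> R by rewrite ltr0n.
pose m := A / k.
(* The variance of [a] over [S] is nonnegative. *)
have var_ge0 : 0 <= \sum_(i in S) (a i - m) ^+ 2 by apply: sumr_ge0 => i _; exact: sqr_ge0.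
have var_expand : \sum_(i in S) (a i - m) ^+ 2 = Q - m * A * 2 + k * m ^+ 2.
  under eq_bigr do rewrite sqrrB.
  rewrite big_split /= sumrB sumrMnl -mulr_suml sumr_const -/A -/Q.
  by rewrite /k mulr_natl [m * A]mulrC mulr_natr.
have mk : m * k = A by rewrite /m divfK // gt_eqF.
rewrite -subr_ge0.
have -> : k * Q - A ^+ 2 = k * (Q - m * A * 2 + k * m ^+ 2) by rewrite -mk; ring.
by rewrite -var_expand mulr_ge0 // ltW.
Qed.

Section L1Support.
Variables (R : realType) (n : nat).
Implicit Types (S : {set 'I_n}) (x z : 'rV[R]_n).

Definition l1norm_on S z : R := \sum_(i in S) `|z 0 i|.

Lemma l1norm_on_ge0 S z : 0 <= l1norm_on S z.
Proof. exact: sumr_ge0. Qed.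

Lemma l1norm_onC S z : l1norm z = l1norm_on S z + l1norm_on (~: S) z.
Proof.
rewrite /l1norm (bigID (mem S)) /=; congr (_ + _).
by apply: eq_bigl => i; rewrite inE.
Qed.

Lemma l1norm_onZ S (l : R) z : 0 <= l -> l1norm_on S (l *: z) = l * l1norm_on S z.
Proof.
move=> l_ge0; rewrite /l1norm_on mulr_sumr.
by apply: eq_bigr => i _; rewrite mxE normrM ger0_norm.
Qed.

Lemma l1normZ (l : R) z : 0 <= l -> l1norm (l *: z) = l * l1norm z.
Proof. by move=> l_ge0; rewrite !(l1norm_onC setT) !l1norm_onZ ?mulrDr. Qed.

Lemma l1norm_gt0 z : z != 0 -> 0 < l1norm z.
Proof.
move=> z_neq0; have [i zi_neq0] : exists i, z 0 i != 0.
  apply/existsP; apply: contraR z_neq0 => /existsPn z0.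
  by apply/eqP/rowP => j; rewrite !mxE; apply/eqP/negbNE.
by rewrite /l1norm (bigD1 i) //= ltr_wpDr ?normr_gt0 // sumr_ge0.
Qed.

Lemma l1norm_on_le_sqrt_card S z :
  l1norm_on S z <= Num.sqrt #|S|%:R * l2norm z.
Proof.
have sqr_le : l1norm_on S z ^+ 2 <= #|S|%:R * \sum_(i < n) z 0 i ^+ 2.
  apply: le_trans (sqr_sum_le_card_sum_sqr S (fun i => `|z 0 i|)) _.
  rewrite ler_wpM2l // [leRHS](bigID (mem S)) /= ler_wpDr //.
    by apply: sumr_ge0 => i _; exact: sqr_ge0.
  by apply: ler_sum => i _; rewrite real_normK ?num_real.
have sum_sqr_ge0 : 0 <= \sum_(i < n) z 0 i ^+ 2 by apply: sumr_ge0 => i _; exact: sqr_ge0.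
rewrite /l2norm -sqrtrM // -(ger0_norm (l1norm_on_ge0 S z)) -sqrtr_sqr.
by rewrite ler_sqrt // mulr_ge0.
Qed.

Definition support x : {set 'I_n} := [set i | x 0 i != 0].

Lemma gamma_descent_l1_support (gamma : R) x z :
  gamma_descent gamma x z ->
  (1 - gamma) * l1norm z <= 2 * l1norm_on (support x) z.
Proof.
rewrite /gamma_descent !(l1norm_onC (support x)).
have off_x : l1norm_on (~: support x) x = 0.
  by apply: big1 => i; rewrite !inE negbK => /eqP ->; rewrite normr0.
have off_xz : l1norm_on (~: support x) (x + z) = l1norm_on (~: support x) z.
  by apply: eq_bigr => i; rewrite !inE negbK mxE => /eqP ->; rewrite add0r.
have on_xz : l1norm_on (support x) x - l1norm_on (support x) z
             <= l1norm_on (support x) (x + z).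
  by rewrite -sumrB; apply: ler_sum => i _; rewrite mxE lerB_normD.
rewrite off_x off_xz addr0; lra.
Qed.

Lemma C_gamma_l1_support (gamma : R) x z :
  C_gamma gamma x z -> (1 - gamma) * l1norm z <= 2 * l1norm_on (support x) z.
Proof.
move=> [l [y [l_ge0 [y_descent ->]]]].
rewrite l1normZ // l1norm_onZ // mulrCA [2 * _]mulrCA ler_wpM2l //.
exact: gamma_descent_l1_support.
Qed.

End L1Support.

Theorem proposition4 (R : realType) (n : nat) (xs : 'rV[R]_n) (k : nat) (gamma : R) :
  k = #|[set i : 'I_n | xs 0 i != 0]| ->
  (1 <= k)%N ->
  0 <= gamma <= 1 ->
  forall z : 'rV[R]_n, C_gamma gamma xs z -> z != 0 ->
    (1 - gamma) / (2 * Num.sqrt (k%:R)) <= l2norm z / l1norm z.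
Proof.
(* The bound holds for every real [gamma]. *)
move=> kE k_ge1 _ z z_cone z_neq0.
have l1_gt0 := l1norm_gt0 z_neq0.
have sqrtk_gt0 : 0 < Num.sqrt (k%:R : R) by rewrite sqrtr_gt0 ltr0n.
rewrite ler_pdivlMr // mulrAC ler_pdivrMr ?mulr_gt0 //.
apply: le_trans (C_gamma_l1_support z_cone) _.
rewrite mulrCA ler_wpM2l // mulrC kE.
exact: l1norm_on_le_sqrt_card.
Qed.
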